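(* Let $k,n$ be positive integers with $k\leqslant n$ and let $Y\subseteq\mathrm{Conf}_k([n])$ be an order ideal with respect to the Bruhat order. Then every linear extension of $Y$ is a flag shelling order.
   Context: $[n]:=\{1,\ldots,n\}$. $[n]^i_<$ denotes the set of $i$-element subsets of $[n]$, identified with increasing $i$-tuples; its Bruhat order is $u\leqslant v$ iff $u_j\leqslant v_j$ for all $j\in[i]$. $\mathrm{Conf}_k([n])$ is the set of $k$-tuples $(a_1,\ldots,a_k)$ of pairwise distinct elements of $[n]$. For $x\in\mathrm{Conf}_k([n])$ and $i\in[k]$, $P^{(i)}(x)\in[n]^i_<$ is the increasing rearrangement of $\{x_1,\ldots,x_i\}$. The Bruhat order on $\mathrm{Conf}_k([n])$ is $x\leqslant y$ iff $P^{(i)}(x)\leqslant P^{(i)}(y)$ for all $i\in[k]$. An order ideal is a subset $Y$ with $y\in Y$, $x\leqslant y$ implying $x\in Y$. A linear extension of $Y$ is a tuple $(L_1,\ldots,L_h)$ listing each element of $Y$ exactly once such that $L_i<L_j$ implies $i<j$. For $y\in\mathrm{Conf}_k([n])$ let $P(y):=\{P^{(1)}(y),\ldots,P^{(k)}(y)\}$ (a $k$-element set whose elements are subsets of $[n]$). A sequence $(F_1,\ldots,F_h)$ of distinct $k$-element sets is a shelling order if for all $i<j$ there exists $z<j$ with $|F_z\cap F_j|=|F_j|-1$ and $F_i\cap F_j\subseteq F_z\cap F_j$. A tuple $(a_1,\ldots,a_h)$ listing the elements of $Y$ is a flag shelling order for $Y$ if $(P(a_1),\ldots,P(a_h))$ is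 a shelling order (of the simplicial complex with facets $\{P(y):y\in Y\}$). *)

(* [n] = {1,...,n} is modelled by 'I_n = {0,...,n-1}
   (an order-preserving relabelling i |-> i-1). *)
From mathcomp Require Import all_boot all_order.
Set Implicit Arguments.
Unset Strict Implicit.
Unset Printing Implicit Defensive.

Section FlagShelling.
Variables (k n : nat).

Definition conf (x : k.-tuple 'I_n) : bool := uniq x.

Definition incr (A : {set 'I_n}) : seq nat :=
  sort leq [seq val a | a <- enum A].
Definition bruhat_sub (A B : {set 'I_n}) : bool :=
  all2 leq (incr A) (incr B).

Definition Pi (x : k.-tuple 'I_n) (i : nat) : {set 'I_n} :=
  [set tnth x j | j : 'I_k & j < i].

Definition bruhat_le (x y : k.-tuple 'I_n) : bool :=
  [forall i : 'I_k, bruhat_sub (Pi x i.+1) (Pi y i.+1)].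
Definition bruhat_lt (x y : k.-tuple 'I_n) : bool :=
  (x != y) && bruhat_le x y.

Definition order_ideal (Y : {set k.-tuple 'I_n}) : Prop :=
  (forall y, y \in Y -> conf y) /\
  (forall x y, conf x -> y \in Y -> bruhat_le x y -> x \in Y).

Definition linear_extension (Y : {set k.-tuple 'I_n})
    (L : seq (k.-tuple 'I_n)) : Prop :=
  [/\ uniq L, (forall y, (y \in L) = (y \in Y)) &
      forall x y, x \in L -> y \in L -> bruhat_lt x y ->
        index x L < index y L].

Definition Pflag (y : k.-tuple 'I_n) : {set {set 'I_n}} :=
  [set Pi y i.+1 | i : 'I_k].

Definition shelling_cond (F : seq {set {set 'I_n}}) : Prop :=
  forall i j, i < j -> j < size F ->
    exists z, [/\ z < j,
      #|nth set0 F z :&: nth set0 F j| = #|nth set0 F j| - 1 &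
      nth set0 F i :&: nth set0 F j \subset nth set0 F z :&: nth set0 F j].

Definition shelling_order (F : seq {set {set 'I_n}}) : Prop :=
  [/\ uniq F, (forall A, A \in F -> #|A| = k) & shelling_cond F].

Definition flag_shelling_order (L : seq (k.-tuple 'I_n)) : Prop :=
  shelling_order [seq Pflag a | a <- L].
End FlagShelling.

(* Let x = L_i and y = L_j with i < j.  It suffices to find y' < y whose flag
   differs from that of y at a single level m at which the flags of x and y
   also differ: y' lies in the ideal Y, hence precedes y in L, and
   P(y') :&: P(y) = P(y) minus P^(m)(y), which contains P(x) :&: P(y).
   Such a y' is obtained by swapping a descent y_m > y_(m+1) when m < k, and
   by replacing y_k with a smaller unused value when m = k.  If no such move is
   available at any level where x and y differ, then, comparing P^(m)(y) with
   P^(m)(x) against the threshold y_m, one finds y <= x in the Bruhat order,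
   which contradicts the fact that y comes after x in L. *)

From mathcomp Require Import all_boot all_order perm.
Set Implicit Arguments.
Unset Strict Implicit.
Unset Printing Implicit Defensive.

Lemma count_ltn_sorted_head (a c : nat) (s : seq nat) :
  c <= a.+1 -> sorted ltn (a :: s) -> count (fun m => m < c) s = 0.
Proof.
move=> ca /(order_path_min ltn_trans) /allP sa.
rewrite (eq_in_count (a2 := pred0)) ?count_pred0 // => m /sa am.
by apply/negbTE; rewrite -leqNgt (leq_trans ca).
Qed.

Lemma all2_leq_of_count (s t : seq nat) :
  sorted ltn s -> sorted ltn t -> size s = size t ->
  (forall c, count (fun m => m < c) t <= count (fun m => m < c) s) ->
  all2 leq s t.
Proof.
elim: s t => [|a s IHs] [|b t] //= ss st [size_st] cnt.
have ab : a <= b.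
  have := cnt a; rewrite ltnn (count_ltn_sorted_head _ ss) //.
  by case: ltnP.
rewrite ab; apply: IHs => [||//|c]; [exact: path_sorted ss | exact: path_sorted st|].
have [cb | bc] := leqP c b; first by rewrite (count_ltn_sorted_head (leqW cb) st).
by have := cnt c; rewrite bc (leq_ltn_trans ab bc).
Qed.

Lemma strict_chain_gap (f : nat -> nat) p q :
  (forall r, p <= r < q -> f r < f r.+1) -> p <= q -> f p + (q - p) <= f q.
Proof.
elim: q => [|q IHq] incr; first by rewrite leqn0 => /eqP ->; rewrite addn0.
rewrite leq_eqVlt => /orP[/eqP <- | ]; first by rewrite subnn addn0.
rewrite ltnS => pq; rewrite subSn // addnS; apply: leq_ltn_trans (incr q _).
  by apply: IHq => // r /andP[pr rq]; apply: incr; rewrite pr ltnW.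
by rewrite pq leqnn.
Qed.

Section BruhatSubsets.
Variable n : nat.
Implicit Types A B C : {set 'I_n}.

Lemma incr_sorted A : sorted ltn (incr A).
Proof.
rewrite ltn_sorted_uniq_leq sort_uniq map_inj_uniq ?enum_uniq //; last exact: val_inj.
exact/sort_sorted/leq_total.
Qed.

Lemma size_incr A : size (incr A) = #|A|.
Proof. by rewrite size_sort size_map cardE. Qed.

Lemma count_incr A c :
  count (fun m => m < c) (incr A) = #|[set a in A | a < c]|.
Proof.
rewrite /incr (seq.permP (permEl (perm_sort _ _))) count_map -size_filter cardE.
apply/perm_size/uniq_perm; rewrite ?(filter_uniq _ (enum_uniq _)) ?enum_uniq // => a.
by rewrite mem_filter !mem_enum !inE andbC.
Qed.

Lemma bruhat_sub_refl A : bruhat_sub A A.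
Proof. by rewrite /bruhat_sub; elim: (incr A) => //= a s ->; rewrite leqnn. Qed.

Lemma bruhat_sub_sep A B (v : nat) : #|A| = #|B| ->
  {in A, forall a, a \notin B -> a <= v} ->
  {in B, forall b, b \notin A -> v < b} -> bruhat_sub A B.
Proof.
move=> AB lowA highB.
apply: all2_leq_of_count; rewrite ?incr_sorted ?size_incr // => c.
rewrite !count_incr; have [cv | vc] := leqP c v.
  apply/subset_leq_card/subsetP => b; rewrite !inE => /andP[Bb bc].
  rewrite bc andbT; apply: contraLR bc => Ab.
  by rewrite -leqNgt (leq_trans cv) // ltnW // highB.
rewrite -(leq_add2r #|[set b in B | c <= b]|).
have split_card (D : {set 'I_n}) :
    #|[set d in D | d < c]| + #|[set d in D | c <= d]| = #|D|.
  rewrite -(cardsID [set d : 'I_n | d < c] D); congr (_ + _); apply: eq_card => d.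
    by rewrite !inE andbC.
  by rewrite !inE leqNgt andbC.
rewrite split_card -AB -(split_card A) leq_add2l.
apply/subset_leq_card/subsetP => a; rewrite !inE => /andP[Aa ca].
rewrite ca andbT; apply: contraLR ca => Ba.
by rewrite -ltnNge (leq_ltn_trans (lowA a Aa Ba)).
Qed.

Lemma bruhat_sub_setU1 C (a b : 'I_n) : a < b -> a \notin C -> b \notin C ->
  bruhat_sub (a |: C) (b |: C).
Proof.
move=> ab aC bC; apply: (bruhat_sub_sep (v := a)).
- by rewrite !cardsU1 aC bC.
- move=> u; rewrite !inE => /orP[/eqP -> // | Cu]; by rewrite Cu orbT.
- move=> u; rewrite !inE => /orP[/eqP -> // | Cu]; by rewrite Cu orbT.
Qed.
End BruhatSubsets.

Section Flags.
Variables k n : nat.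
Implicit Types x y : k.-tuple 'I_n.

Lemma PiP x i a : reflect (exists2 j : 'I_k, j < i & tnth x j = a) (a \in Pi x i).
Proof.
apply: (iffP imsetP) => [[j] | [j ji <-]]; last by exists j; rewrite ?inE.
by rewrite inE => ji ->; exists j.
Qed.

Lemma mem_Pi_tnth x i (j : 'I_k) : uniq x -> (tnth x j \in Pi x i) = (j < i).
Proof.
move=> /tuple_uniqP xinj; apply/PiP/idP => [[j' j'i /xinj <-] // | ji].
by exists j.
Qed.

Lemma Pi0 x : Pi x 0 = set0.
Proof. by apply/setP => a; rewrite inE; apply/PiP => -[]. Qed.

Lemma Pi_S x (i : 'I_k) : Pi x i.+1 = tnth x i |: Pi x i.
Proof.
apply/setP => a; rewrite !inE; apply/PiP/orP => [[j] | [/eqP -> | /PiP[j ji <-]]].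
- rewrite ltnS leq_eqVlt => /orP[/eqP/val_inj -> -> | ji <-]; first by left.
  by right; apply/PiP; exists j.
- by exists i.
- by exists j => //; apply: ltnW.
Qed.

Lemma Pi_subset x i j : i <= j -> Pi x i \subset Pi x j.
Proof.
move=> ij; apply/subsetP => a /PiP[l li <-].
by apply/PiP; exists l => //; apply: leq_trans ij.
Qed.

Lemma card_Pi x i : uniq x -> i <= k -> #|Pi x i| = i.
Proof.
move=> ux; elim: i => [|i IHi] ik; first by rewrite Pi0 cards0.
by rewrite (Pi_S x (Ordinal ik)) cardsU1 mem_Pi_tnth //= ltnn IHi // ltnW.
Qed.

Lemma Pi_Sdiff x (i : 'I_k) : uniq x -> Pi x i.+1 :\: Pi x i = [set tnth x i].
Proof.
move=> ux; rewrite Pi_S setDUl setDv setU0 setDE; apply/setIidPl.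
by rewrite sub1set !inE mem_Pi_tnth ?ltnn.
Qed.

Lemma eq_Pi_level x y i j : uniq x -> uniq y -> i <= k -> j <= k ->
  Pi x i = Pi y j -> i = j.
Proof. by move=> ux uy ik jk e; rewrite -(card_Pi ux ik) e card_Pi. Qed.

Lemma tuple_eq_Pi x y : uniq x -> uniq y ->
  (forall i, i <= k -> Pi x i = Pi y i) -> x = y.
Proof.
move=> ux uy eqPi; apply: eq_from_tnth => i; apply/set1_inj.
by rewrite -!Pi_Sdiff // !eqPi // ltnW.
Qed.

Lemma Pi_level_inj y : uniq y -> injective (fun i : 'I_k => Pi y i.+1).
Proof. by move=> uy i j /(eq_Pi_level uy uy (ltn_ord i) (ltn_ord j)) [/val_inj]. Qed.

Lemma mem_Pflag x y (i : 'I_k) : uniq x -> uniq y ->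
  (Pi x i.+1 \in Pflag y) = (Pi x i.+1 == Pi y i.+1).
Proof.
move=> ux uy; apply/imsetP/eqP => [[j _ e] | ->]; last by exists i.
by rewrite e (eq_Pi_level ux uy (ltn_ord i) (ltn_ord j) e).
Qed.

Lemma card_Pflag y : uniq y -> #|Pflag y| = k.
Proof. by move=> uy; rewrite card_imset ?card_ord //; apply: Pi_level_inj. Qed.

Lemma Pflag_inj x y : uniq x -> uniq y -> Pflag x = Pflag y -> x = y.
Proof.
move=> ux uy e; apply: tuple_eq_Pi => // -[_ | i ik]; first by rewrite !Pi0.
by apply/eqP; rewrite -(mem_Pflag (Ordinal ik)) // -e imset_f.
Qed.

Lemma Pflag_setI x y : uniq x -> uniq y ->
  Pflag x :&: Pflag y = [set Pi y i.+1 | i : 'I_k & Pi x i.+1 == Pi y i.+1].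
Proof.
move=> ux uy; apply/setP => A; rewrite inE; apply/andP/imsetP.
  by case=> /imsetP[i _ ->]; rewrite mem_Pflag // => /eqP e; exists i; rewrite ?inE e.
by case=> i; rewrite inE => /eqP e ->; rewrite -e imset_f // mem_Pflag // e.
Qed.

Definition flag_neighbor (i0 : 'I_k) y' y : bool :=
  [forall i : 'I_k, (Pi y' i.+1 == Pi y i.+1) == (i != i0)].

Lemma flag_neighbor_shelling x y y' (i0 : 'I_k) :
  uniq x -> uniq y -> uniq y' -> flag_neighbor i0 y' y ->
  Pi x i0.+1 != Pi y i0.+1 ->
  #|Pflag y' :&: Pflag y| = #|Pflag y| - 1 /\
  Pflag x :&: Pflag y \subset Pflag y' :&: Pflag y.
Proof.
move=> ux uy uy' /forallP nb x_i0.
have -> : Pflag y' :&: Pflag y = [set Pi y i.+1 | i : 'I_k in [set~ i0]].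
  rewrite Pflag_setI //; apply/setP => A.
  apply/imsetP/imsetP => -[i]; rewrite !inE => Pi_i ->; exists i => //.
    by rewrite !inE -(eqP (nb i)).
  by rewrite !inE (eqP (nb i)).
split.
  by rewrite card_Pflag // card_imset ?cardsC1 ?card_ord ?subn1 //; apply: Pi_level_inj.
rewrite Pflag_setI //; apply/subsetP => A /imsetP[i]; rewrite inE => x_i ->.
by rewrite imset_f // !inE; apply: contraTneq x_i => ->.
Qed.

Lemma eq_Pi x y m : (forall r : 'I_k, r < m -> tnth x r = tnth y r) -> Pi x m = Pi y m.
Proof.
move=> e; apply/setP => a.
by apply/PiP/PiP => -[r rm <-]; exists r; rewrite ?e.
Qed.

Lemma Pi_perm y (s : {perm 'I_k}) m : (forall r, (s r < m) = (r < m)) ->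
  Pi [tuple tnth y (s r) | r < k] m = Pi y m.
Proof.
move=> sm; apply/setP => a; apply/PiP/PiP => -[r rm <-].
  by exists (s r); rewrite ?sm ?tnth_mktuple.
exists (s^-1 r)%g; first by rewrite -sm permKV.
by rewrite tnth_mktuple permKV.
Qed.

Lemma lower_neighbor_setU1 y y' (i : 'I_k) (a : 'I_n) : uniq y ->
  (forall j : 'I_k, j != i -> Pi y' j.+1 = Pi y j.+1) ->
  Pi y' i.+1 = a |: Pi y i -> a < tnth y i -> a \notin Pi y i ->
  flag_neighbor i y' y && bruhat_le y' y.
Proof.
move=> uy eqPi y'_i a_lt a_Pi.
have y_i : tnth y i \notin Pi y i by rewrite mem_Pi_tnth ?ltnn.
apply/andP; split; apply/forallP => j; have [-> | ji] := eqVneq j i.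
  rewrite y'_i Pi_S eqbF_neg; apply/negP => /eqP/setP/(_ a).
  have a_ne : a != tnth y i by apply: contraTneq a_lt => ->; rewrite ltnn.
  by rewrite !inE eqxx (negbTE a_Pi) (negbTE a_ne).
- by rewrite eqPi // eqxx.
- by rewrite y'_i Pi_S bruhat_sub_setU1.
- by rewrite eqPi // bruhat_sub_refl.
Qed.

Lemma lower_neighbor_swap y (i j : 'I_k) : uniq y -> j = i.+1 :> nat ->
  tnth y j < tnth y i ->
  exists2 y' : k.-tuple 'I_n, uniq y' & flag_neighbor i y' y && bruhat_le y' y.
Proof.
move=> uy ji desc; pose y' := [tuple tnth y (tperm i j r) | r < k].
have Pi_y' m : m != j :> nat -> Pi y' m = Pi y m.
  rewrite ji eq_sym => /negbTE mj; apply: Pi_perm => r.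
  by case: tpermP => [-> | -> |] //; rewrite ji [i < m]leq_eqVlt mj.
exists y'.
  apply/tuple_uniqP => r r'; rewrite !tnth_mktuple.
  by move/tuple_uniqP: uy => yinj /yinj/perm_inj.
apply: (lower_neighbor_setU1 (a := tnth y j)) => //.
- by move=> r ri; apply: Pi_y'; rewrite ji eqSS.
- by rewrite Pi_S Pi_y' ?tnth_mktuple ?tpermL // ji neq_ltn ltnSn.
- by rewrite mem_Pi_tnth // ji ltnNge leqnSn.
Qed.

Lemma lower_neighbor_last y (l : 'I_k) (u : 'I_n) : uniq y -> l.+1 = k ->
  u < tnth y l -> u \notin Pi y l ->
  exists2 y' : k.-tuple 'I_n, uniq y' & flag_neighbor l y' y && bruhat_le y' y.
Proof.
move=> uy lk u_lt u_Pi; pose y' := [tuple if r == l then u else tnth y r | r < k].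
have lt_l (r : 'I_k) : r != l -> r < l.
  by move=> rl; rewrite ltn_neqAle rl -ltnS lk ltn_ord.
have y_Pi (r : 'I_k) : r != l -> tnth y r \in Pi y l by move/lt_l; rewrite mem_Pi_tnth.
have Pi_y' m : m <= l -> Pi y' m = Pi y m.
  move=> ml; apply: eq_Pi => r rm; rewrite tnth_mktuple ifN //.
  by apply: contraTneq rm => ->; rewrite -leqNgt.
exists y'.
  apply/tuple_uniqP => r r'; rewrite !tnth_mktuple.
  have [-> | rl] := eqVneq r l; have [-> | r'l] := eqVneq r' l => // e.
  - by rewrite e y_Pi in u_Pi.
  - by rewrite -e y_Pi in u_Pi.
  - by move/tuple_uniqP: uy; apply.
apply: (lower_neighbor_setU1 (a := u)) => //.
- by move=> r rl; apply: Pi_y'; apply: lt_l.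
- by rewrite Pi_S Pi_y' // tnth_mktuple eqxx.
Qed.

(* The hypotheses below say that no move of the header is available at a
   level where the flags of x and y differ. *)
Section Ascents.
Variables x y : k.-tuple 'I_n.
Hypotheses (ux : uniq x) (uy : uniq y).
Hypothesis ascent : forall i j : 'I_k, j = i.+1 :> nat ->
  Pi x j != Pi y j -> tnth y i < tnth y j.
Hypothesis top_gap : forall (l : 'I_k) (u : 'I_n), l.+1 = k ->
  Pi x k != Pi y k -> u < tnth y l -> u \in Pi y l.

Let f r := nth 0 [seq val a | a <- y] r.

Let f_tnth (j : 'I_k) : f j = tnth y j.
Proof. by rewrite /f (nth_map (tnth y j)) ?size_tuple // -tnth_nth. Qed.

Let f_step r : r.+1 < k -> Pi x r.+1 != Pi y r.+1 -> f r < f r.+1.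
Proof.
by move=> rk /(@ascent (Ordinal (ltnW rk)) (Ordinal rk) erefl); rewrite -!f_tnth.
Qed.

Lemma ascents_below (i : 'I_k) :
  {in Pi y i.+1, forall a, a \notin Pi x i.+1 -> a <= tnth y i}.
Proof.
move=> _ /PiP[q qi <-] x_q; rewrite -!f_tnth.
apply: leq_trans (leq_addr (i - q) _) (strict_chain_gap _ _) => // r /andP[qr ri].
apply: f_step; first exact: leq_ltn_trans ri (ltn_ord i).
apply: contraNneq x_q => e; apply: (subsetP (Pi_subset x (ltnW ri : r.+1 <= i.+1))).
by rewrite e mem_Pi_tnth // ltnS.
Qed.

Lemma ascents_above (i : 'I_k) :
  {in Pi x i.+1, forall a, a \notin Pi y i.+1 -> tnth y i < a}.
Proof.
move=> u x_u y_u.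
have differ r : i <= r -> r < k -> u \notin Pi y r.+1 -> Pi x r.+1 != Pi y r.+1.
  move=> ir rk; apply: contraNneq => <-.
  exact: subsetP (Pi_subset x (ir : i.+1 <= r.+1)) u x_u.
have [/tnthP[s u_s] | u_y] := boolP (u \in y).
  subst u; have i_s : i < s by move: y_u; rewrite mem_Pi_tnth // ltnS -ltnNge.
  rewrite -!f_tnth.
  apply: leq_trans (strict_chain_gap _ (ltnW i_s)) => [|r /andP[ir rs]].
    by rewrite -addn1 leq_add2l subn_gt0.
  have rk : r.+1 < k := leq_ltn_trans rs (ltn_ord s).
  apply: (f_step rk); apply: (differ r ir (ltnW rk)).
  by rewrite mem_Pi_tnth // ltnS -ltnNge.
have y_u' m : u \notin Pi y m by apply: contra u_y => /PiP[j _ <-]; apply: mem_tnth.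
have l_k : k.-1.+1 = k := prednK (leq_ltn_trans (leq0n i) (ltn_ord i)).
have lk : k.-1 < k by rewrite l_k.
pose l := Ordinal lk.
have il : i <= l by rewrite -ltnS l_k.
have x_k : Pi x k != Pi y k by have := differ l il lk (y_u' _); rewrite l_k.
have f_il : f i <= f l.
  apply: leq_trans (leq_addr (l - i) _) (strict_chain_gap _ il) => r /andP[ir rl].
  have rk : r.+1 < k := leq_ltn_trans rl lk.
  exact: f_step rk (differ r ir (ltnW rk) (y_u' _)).
rewrite -f_tnth; apply: leq_ltn_trans f_il _; rewrite f_tnth ltnNge leq_eqVlt negb_or.
apply/andP; split.
  by apply: contra u_y => /eqP/val_inj ->; apply: mem_tnth.
by apply: contra (y_u' l) => /(@top_gap l u l_k x_k).
Qed.

Lemma bruhat_le_of_ascents : bruhat_le y x.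
Proof.
apply/forallP => i; apply: (bruhat_sub_sep (v := tnth y i)).
- by rewrite !card_Pi.
- exact: ascents_below.
- exact: ascents_above.
Qed.
End Ascents.

Lemma bruhat_le_or_lower_neighbor x y : uniq x -> uniq y ->
  bruhat_le y x \/ exists y' (i : 'I_k),
    [/\ uniq y', flag_neighbor i y' y, bruhat_le y' y & Pi x i.+1 != Pi y i.+1].
Proof.
move=> ux uy.
have [/existsP[y' /existsP[i /and4P[]]] | none] := boolP
  [exists y' : k.-tuple 'I_n, exists i : 'I_k,
    [&& uniq y', flag_neighbor i y' y, bruhat_le y' y & Pi x i.+1 != Pi y i.+1]].
  by right; exists y', i.
left; apply: bruhat_le_of_ascents => // [i j ji x_j | l u lk x_k u_lt].
  apply: contraNT none; rewrite -leqNgt leq_eqVlt => /orP[/eqP/val_inj | desc].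
    by move/tuple_uniqP: uy => yinj /yinj ij; move: ji; rewrite ij => /n_Sn.
  have [y' uy' /andP[nb le]] := lower_neighbor_swap uy ji desc.
  by apply/existsP; exists y'; apply/existsP; exists i; rewrite uy' nb le -ji x_j.
apply: contraNT none => u_Pi.
have [y' uy' /andP[nb le]] := lower_neighbor_last uy lk u_lt u_Pi.
by apply/existsP; exists y'; apply/existsP; exists l; rewrite uy' nb le lk x_k.
Qed.
End Flags.

Theorem theorem4p5 (k n : nat) (hk : 0 < k) (hkn : k <= n)
    (Y : {set k.-tuple 'I_n}) (hY : order_ideal Y)
    (L : seq (k.-tuple 'I_n)) (hL : linear_extension Y L) :
  flag_shelling_order L.
Proof.
case: hY => conf_Y ideal_Y; case: hL => uL memL ext.
have uniq_L y : y \in L -> uniq y by rewrite memL => /conf_Y.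
pose y0 : k.-tuple 'I_n := [tuple Ordinal (leq_trans hk hkn) | _ < k].
split.
- by rewrite map_inj_in_uniq // => x y xL yL; apply: Pflag_inj; apply: uniq_L.
- by move=> _ /mapP[y yL ->]; rewrite card_Pflag // uniq_L.
move=> i j ij; rewrite size_map => jL; have iL := ltn_trans ij jL.
rewrite !(nth_map y0) //; set x := nth y0 L i; set y := nth y0 L j.
have [xL yL] : x \in L /\ y \in L by rewrite !mem_nth.
have [ux uy] := (uniq_L x xL, uniq_L y yL).
have [yx | [y' [i0 [uy' nb le x_i0]]]] := bruhat_le_or_lower_neighbor ux uy.
  have y_ne_x : y != x by rewrite nth_uniq // neq_ltn ij orbT.
  have := ext y x yL xL; rewrite /bruhat_lt y_ne_x yx !index_uniq // => /(_ isT).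
  by rewrite ltnNge ltnW.
have y'L : y' \in L by rewrite memL; apply: ideal_Y le; rewrite // -memL.
have y'_y : index y' L < j.
  rewrite -[j](index_uniq y0 jL uL) ext // /bruhat_lt le andbT.
  by apply: contraTneq nb => ->; apply/forallPn; exists i0; rewrite !eqxx.
exists (index y' L); rewrite (nth_map y0) ?index_mem // nth_index //.
by have [card_y' sub_y'] := flag_neighbor_shelling ux uy uy' nb x_i0; split.
Qed.
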